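(* Let $S$ and $T$ be expanding automaton semigroups. Then $S\times T$ is an expanding automaton semigroup if and only if $S\times T$ is finitely generated.
   Context: An expanding automaton is $(Q,\Sigma,t,o)$ with $Q$ a finite set of states, $\Sigma$ a finite alphabet, $t:Q\times\Sigma\to Q$ and $o:Q\times\Sigma\to\Sigma^+$. Each state $q$ induces $q:\Sigma^*\to\Sigma^*$ by $q(\emptyset)=\emptyset$, $q(\sigma w)=o(q,\sigma)\,q'(w)$ with $q'=t(q,\sigma)$; an expanding automaton semigroup is (a semigroup isomorphic to) the semigroup of maps generated under composition by the states. *)

From Stdlib Require Import List.
From mathcomp Require Import all_boot.
Set Implicit Arguments. Unset Strict Implicit. Unset Printing Implicit Defensive.

Record Sgrp := {
  sg_car :> Type;
  sg_op : sg_car -> sg_car -> sg_car;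
  sg_assoc : associative sg_op }.

Definition prod_op (S T : Sgrp) (x y : S * T) : S * T :=
  (sg_op x.1 y.1, sg_op x.2 y.2).

Lemma prod_op_assoc (S T : Sgrp) : associative (@prod_op S T).
Proof. by move=> [a b] [c d] [e f]; rewrite /prod_op /= !sg_assoc. Qed.

Definition prod_sg (S T : Sgrp) : Sgrp :=
  {| sg_car := (S * T)%type; sg_op := @prod_op S T; sg_assoc := @prod_op_assoc S T |}.

Fixpoint sg_prod_ne (S : Sgrp) (x : S) (s : list S) : S :=
  match s with
  | [::] => x
  | y :: s' => sg_op x (sg_prod_ne y s')
  end.

Definition finitely_generated (S : Sgrp) : Prop :=
  exists gens : list S, forall x : S,
    exists (g : S) (s : list S),
      In g gens /\ (forall y, In y s -> In y gens) /\
      x = sg_prod_ne g s.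

Record expanding_automaton := {
  ea_Q : finType;
  ea_Sig : finType;
  ea_t : ea_Q -> ea_Sig -> ea_Q;
  ea_o : ea_Q -> ea_Sig -> seq ea_Sig;
  ea_o_nonempty : forall q a, ea_o q a <> [::] }.

Fixpoint ea_act (A : expanding_automaton) (q : ea_Q A) (w : seq (ea_Sig A))
  : seq (ea_Sig A) :=
  match w with
  | [::] => [::]
  | a :: w' => ea_o q a ++ ea_act (ea_t q a) w'
  end.

Fixpoint ea_comp (A : expanding_automaton) (q : ea_Q A) (qs : seq (ea_Q A))
  : seq (ea_Sig A) -> seq (ea_Sig A) :=
  match qs with
  | [::] => ea_act q
  | p :: qs' => ea_act q \o ea_comp p qs'
  end.

(* S is an expanding automaton semigroup: S is isomorphic to the semigroup of
   maps Sigma^* -> Sigma^* generated under composition by the states of some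
   expanding automaton A (maps being compared extensionally). *)
Definition is_expanding_automaton_semigroup (S : Sgrp) : Prop :=
  exists (A : expanding_automaton) (phi : S -> seq (ea_Sig A) -> seq (ea_Sig A)),
    [/\ (forall x y : S, phi x =1 phi y -> x = y),
        (forall x y : S, phi (sg_op x y) =1 phi x \o phi y),
        (forall x : S, exists (q : ea_Q A) (qs : seq (ea_Q A)), phi x =1 ea_comp q qs)
      & (forall (q : ea_Q A) (qs : seq (ea_Q A)), exists x : S, phi x =1 ea_comp q qs)].

From Stdlib Require Import List IndefiniteDescription.
From mathcomp Require Import all_boot.
Set Implicit Arguments. Unset Strict Implicit. Unset Printing Implicit Defensive.

(* An expanding automaton semigroup is generated by the maps of its finitely
   many states.  Conversely, let S and T be realised by automata A and B and
   let S x T be generated by finitely many pairs; each component of a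
   generator is a composite of at most N + 1 states.  Take the automaton over
   the alphabet Sigma_A + Sigma_B whose states are pairs of composites of at
   most N + 1 states of A and of B: a Sigma_A-letter is fed to the first
   composite and a Sigma_B-letter to the second.  On a word of Sigma_A the pair
   (s, t) acts as s and on a word of Sigma_B as t, which gives injectivity;
   the generators are states, so every element is a composite of states; and
   every composite of states acts as some pair, because S and T contain all
   composites of states of A and B. *)

Lemma mem_In (X : eqType) (x : X) (s : seq X) : x \in s -> In x s.
Proof. by elim: s => //= y s IH; rewrite in_cons => /orP[/eqP ->|/IH]; auto. Qed.

Lemma In_leq_sumn (X : Type) (f : X -> nat) (x : X) (s : seq X) :
  In x s -> f x <= sumn (map f s).
Proof.
elim: s => //= y s IH [->|/IH le_fx]; first exact: leq_addr.
exact: leq_trans le_fx (leq_addl _ _).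
Qed.

Section CompositeAction.
Variable A : expanding_automaton.
Notation Q := (ea_Q A).
Notation Sig := (ea_Sig A).

Fixpoint ea_reach (q : Q) (w : seq Sig) : Q :=
  if w is a :: w' then ea_reach (ea_t q a) w' else q.

Lemma ea_act_cat q u v : ea_act q (u ++ v) = ea_act q u ++ ea_act (ea_reach q u) v.
Proof. by elim: u q => //= a u IH q; rewrite IH catA. Qed.

Lemma ea_reach_cat q u v : ea_reach q (u ++ v) = ea_reach (ea_reach q u) v.
Proof. by elim: u q => //=. Qed.

Lemma ea_act_eq_nil (q : Q) (w : seq Sig) : (ea_act q w == [::]) = (w == [::]).
Proof.
case: w => //= a w; case E: (ea_o q a) => //.
by have := @ea_o_nonempty A q a; rewrite E.
Qed.

(* [ea_seq_act [:: q1; ...; qn]] is q1 o ... o qn (qn acts first);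
   [ea_seq_step] feeds one letter through it, returning the output word and
   the list of next states. *)
Fixpoint ea_seq_act (l : seq Q) : seq Sig -> seq Sig :=
  if l is q :: l' then ea_act q \o ea_seq_act l' else id.

Fixpoint ea_seq_step (l : seq Q) (a : Sig) : seq Sig * seq Q :=
  if l is q :: l' then
    let p := ea_seq_step l' a in (ea_act q p.1, ea_reach q p.1 :: p.2)
  else ([:: a], [::]).

Fixpoint ea_seq_reach (l : seq Q) (w : seq Sig) : seq Q :=
  if l is q :: l' then ea_reach q (ea_seq_act l' w) :: ea_seq_reach l' w else [::].

Lemma ea_comp_seq_act q qs : ea_comp q qs =1 ea_seq_act (q :: qs).
Proof. by elim: qs q => [|p qs IH] q w //=; rewrite IH. Qed.

Lemma ea_seq_act_nil l : ea_seq_act l [::] = [::].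
Proof. by elim: l => //= q l ->. Qed.

Lemma ea_seq_reach_nil l : ea_seq_reach l [::] = l.
Proof. by elim: l => //= q l ->; rewrite ea_seq_act_nil. Qed.

Lemma ea_seq_act_cons l a w :
  ea_seq_act l (a :: w) = (ea_seq_step l a).1 ++ ea_seq_act (ea_seq_step l a).2 w.
Proof. by elim: l => //= q l IH; rewrite IH ea_act_cat. Qed.

Lemma ea_seq_reach_cons l a w :
  ea_seq_reach l (a :: w) = ea_seq_reach (ea_seq_step l a).2 w.
Proof. by elim: l => //= q l IH; rewrite IH ea_seq_act_cons ea_reach_cat. Qed.

Lemma ea_seq_act_comp l l' w : ea_seq_act (l ++ l') w = ea_seq_act l (ea_seq_act l' w).
Proof. by elim: l => //= q l ->. Qed.

Lemma size_ea_seq_step l a : size (ea_seq_step l a).2 = size l.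
Proof. by elim: l => //= q l ->. Qed.

Lemma ea_seq_step_neq_nil l a : (ea_seq_step l a).1 != [::].
Proof. by elim: l => //= q l IH; rewrite ea_act_eq_nil. Qed.

Lemma ea_seq_step_cat l l' a : ea_seq_step (l ++ l') a =
  (ea_seq_act l (ea_seq_step l' a).1,
   ea_seq_reach l (ea_seq_step l' a).1 ++ (ea_seq_step l' a).2).
Proof. by elim: l => [|q l IH] /=; [case: (ea_seq_step l' a) | rewrite IH]. Qed.

Lemma ea_seq_step_eq l l' a : ea_seq_act l =1 ea_seq_act l' ->
  (ea_seq_step l a).1 = (ea_seq_step l' a).1 /\
  ea_seq_act (ea_seq_step l a).2 =1 ea_seq_act (ea_seq_step l' a).2.
Proof.
move=> eq_ll'.
have eq1 : (ea_seq_step l a).1 = (ea_seq_step l' a).1.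
  by have := eq_ll' [:: a]; rewrite !ea_seq_act_cons !ea_seq_act_nil !cats0.
split=> // w; have := eq_ll' (a :: w); rewrite !ea_seq_act_cons eq1.
by move/eqP; rewrite eqseq_cat // => /andP[_ /eqP].
Qed.

End CompositeAction.

Section BoundedSeqs.
Variable X : finType.

Fixpoint bounded_seqs (n : nat) : seq (seq X) :=
  if n is n'.+1 then [::] :: [seq x :: l | x <- enum X, l <- bounded_seqs n']
  else [:: [::]].

Lemma mem_bounded_seqs n l : (l \in bounded_seqs n) = (size l <= n).
Proof.
elim: n l => [|n IH] [|x l] //=; rewrite in_cons /= ltnS -IH.
apply/allpairsPdep/idP => [[y [l' [_ ? [_ ->]]]] // | l_in].
by exists x, l; rewrite mem_enum.
Qed.

Lemma nil_bounded_seqs n : [::] \in bounded_seqs n.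
Proof. by rewrite mem_bounded_seqs. Qed.

End BoundedSeqs.

Section ProductAction.
Variables A B : expanding_automaton.
Notation Sig := (ea_Sig A + ea_Sig B)%type.

Fixpoint prod_seq_act (lA : seq (ea_Q A)) (lB : seq (ea_Q B)) (w : seq Sig) : seq Sig :=
  match w with
  | [::] => [::]
  | inl a :: w' =>
      map inl (ea_seq_step lA a).1 ++ prod_seq_act (ea_seq_step lA a).2 lB w'
  | inr b :: w' =>
      map inr (ea_seq_step lB b).1 ++ prod_seq_act lA (ea_seq_step lB b).2 w'
  end.

Lemma prod_seq_act_inl lA lB u w : prod_seq_act lA lB (map inl u ++ w) =
  map inl (ea_seq_act lA u) ++ prod_seq_act (ea_seq_reach lA u) lB w.
Proof.
elim: u lA => [|a u IH] lA /=; first by rewrite ea_seq_act_nil ea_seq_reach_nil.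
by rewrite IH ea_seq_act_cons ea_seq_reach_cons map_cat catA.
Qed.

Lemma prod_seq_act_inr lA lB u w : prod_seq_act lA lB (map inr u ++ w) =
  map inr (ea_seq_act lB u) ++ prod_seq_act lA (ea_seq_reach lB u) w.
Proof.
elim: u lB => [|b u IH] lB /=; first by rewrite ea_seq_act_nil ea_seq_reach_nil.
by rewrite IH ea_seq_act_cons ea_seq_reach_cons map_cat catA.
Qed.

Lemma prod_seq_act_comp lA lB lA' lB' w :
  prod_seq_act lA lB (prod_seq_act lA' lB' w) = prod_seq_act (lA ++ lA') (lB ++ lB') w.
Proof.
elim: w lA lB lA' lB' => // [[a|b] w IH] lA lB lA' lB' /=.
  by rewrite prod_seq_act_inl IH ea_seq_step_cat.
by rewrite prod_seq_act_inr IH ea_seq_step_cat.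
Qed.

Lemma eq_prod_seq_act lA lA' lB lB' :
  ea_seq_act lA =1 ea_seq_act lA' -> ea_seq_act lB =1 ea_seq_act lB' ->
  prod_seq_act lA lB =1 prod_seq_act lA' lB'.
Proof.
move=> eqA eqB w.
elim: w lA lA' lB lB' eqA eqB => // [[a|b] w IH] lA lA' lB lB' eqA eqB /=.
  by have [-> eqA'] := ea_seq_step_eq a eqA; rewrite (IH _ _ _ _ eqA' eqB).
by have [-> eqB'] := ea_seq_step_eq b eqB; rewrite (IH _ _ _ _ eqA eqB').
Qed.

Lemma prod_seq_act_injective lA lA' lB lB' :
  prod_seq_act lA lB =1 prod_seq_act lA' lB' ->
  ea_seq_act lA =1 ea_seq_act lA' /\ ea_seq_act lB =1 ea_seq_act lB'.
Proof.
move=> eq_prod; split=> u.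
  have := eq_prod (map inl u); rewrite -(cats0 (map _ u)) !prod_seq_act_inl /=.
  by rewrite !cats0 => /inj_map; apply=> x y [].
have := eq_prod (map inr u); rewrite -(cats0 (map _ u)) !prod_seq_act_inr /=.
by rewrite !cats0 => /inj_map; apply=> x y [].
Qed.

End ProductAction.

Section ProductAutomaton.
Variables (A B : expanding_automaton) (N : nat).

(* A state ((q, l), (p, m)) stands for the pair of composites q :: l and
   p :: m, with l and m of length at most N. *)
Definition prod_state : finType :=
  ((ea_Q A * seq_sub (bounded_seqs (ea_Q A) N)) *
   (ea_Q B * seq_sub (bounded_seqs (ea_Q B) N)))%type.

Definition prod_states_l (st : prod_state) : seq (ea_Q A) := st.1.1 :: ssval st.1.2.
Definition prod_states_r (st : prod_state) : seq (ea_Q B) := st.2.1 :: ssval st.2.2.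

Definition prod_trans (st : prod_state) (c : ea_Sig A + ea_Sig B) : prod_state :=
  match c with
  | inl a => let l := (ea_seq_step (prod_states_l st) a).2 in
             ((head st.1.1 l, insubd st.1.2 (behead l)), st.2)
  | inr b => let l := (ea_seq_step (prod_states_r st) b).2 in
             (st.1, (head st.2.1 l, insubd st.2.2 (behead l)))
  end.

Definition prod_out (st : prod_state) (c : ea_Sig A + ea_Sig B) : seq (ea_Sig A + ea_Sig B) :=
  match c with
  | inl a => map inl (ea_seq_step (prod_states_l st) a).1
  | inr b => map inr (ea_seq_step (prod_states_r st) b).1
  end.

Lemma prod_out_nonempty st c : prod_out st c <> [::].
Proof.
case: c => [a|b]; rewrite /prod_out.
  by case: (ea_seq_step (prod_states_l st) a).1 (ea_seq_step_neq_nil (prod_states_l st) a).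
by case: (ea_seq_step (prod_states_r st) b).1 (ea_seq_step_neq_nil (prod_states_r st) b).
Qed.

Definition prod_automaton : expanding_automaton :=
  {| ea_Q := prod_state; ea_Sig := (ea_Sig A + ea_Sig B)%type;
     ea_t := prod_trans; ea_o := prod_out; ea_o_nonempty := prod_out_nonempty |}.

Lemma prod_states_l_trans st a :
  prod_states_l (prod_trans st (inl a)) = (ea_seq_step (prod_states_l st) a).2.
Proof.
rewrite /prod_states_l /= val_insubd mem_bounded_seqs size_ea_seq_step.
by rewrite -mem_bounded_seqs (valP st.1.2).
Qed.

Lemma prod_states_r_trans st b :
  prod_states_r (prod_trans st (inr b)) = (ea_seq_step (prod_states_r st) b).2.
Proof.
rewrite /prod_states_r /= val_insubd mem_bounded_seqs size_ea_seq_step.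
by rewrite -mem_bounded_seqs (valP st.2.2).
Qed.

Lemma ea_act_prod_automaton (st : prod_state) w :
  ea_act (A := prod_automaton) st w =
  prod_seq_act (prod_states_l st) (prod_states_r st) w.
Proof.
elim: w st => //= [[a|b] w IH] st /=; rewrite IH.
  by rewrite prod_states_l_trans.
by rewrite prod_states_r_trans.
Qed.

End ProductAutomaton.

Lemma eas_finitely_generated (X : Sgrp) :
  is_expanding_automaton_semigroup X -> finitely_generated X.
Proof.
move=> [A [phi [phi_inj phi_morph phi_rep phi_onto]]].
have [elt elt_act] := functional_choice _ (fun q => phi_onto q [::]).
have elt_gen q : In (elt q) (map elt (enum (ea_Q A))).
  by apply: List.in_map; apply: mem_In; rewrite mem_enum.
exists (map elt (enum (ea_Q A))) => x.
have [q [qs phi_x]] := phi_rep x.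
exists (elt q), (map elt qs); split=> //; split=> [y /List.in_map_iff [p [<- _]] //|].
apply: phi_inj => w; rewrite phi_x.
elim: qs q w {phi_x} => [|p qs IH] q w /=; first by rewrite elt_act.
by rewrite phi_morph /= elt_act IH.
Qed.

Lemma ea_comp_choice (X : Type) (A : expanding_automaton)
    (phi : X -> seq (ea_Sig A) -> seq (ea_Sig A)) :
  (forall x, exists q qs, phi x =1 ea_comp q qs) ->
  exists rep : X -> ea_Q A * seq (ea_Q A), forall x, phi x =1 ea_comp (rep x).1 (rep x).2.
Proof.
move=> phi_rep; apply: (functional_choice (fun x (p : ea_Q A * _) => phi x =1 ea_comp p.1 p.2)) => x.
by have [q [qs phi_x]] := phi_rep x; exists (q, qs).
Qed.

Section FinitelyGeneratedProduct.
Variables (S T : Sgrp) (A B : expanding_automaton).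
Variable phi : S -> seq (ea_Sig A) -> seq (ea_Sig A).
Variable psi : T -> seq (ea_Sig B) -> seq (ea_Sig B).
Hypothesis phi_inj : forall s s' : S, phi s =1 phi s' -> s = s'.
Hypothesis psi_inj : forall t t' : T, psi t =1 psi t' -> t = t'.
Hypothesis phi_morph : forall s s' : S, phi (sg_op s s') =1 phi s \o phi s'.
Hypothesis psi_morph : forall t t' : T, psi (sg_op t t') =1 psi t \o psi t'.
Hypothesis phi_onto : forall q qs, exists s : S, phi s =1 ea_comp q qs.
Hypothesis psi_onto : forall p ps, exists t : T, psi t =1 ea_comp p ps.
Variable repS : S -> ea_Q A * seq (ea_Q A).
Variable repT : T -> ea_Q B * seq (ea_Q B).
Hypothesis repS_act : forall s, phi s =1 ea_comp (repS s).1 (repS s).2.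
Hypothesis repT_act : forall t, psi t =1 ea_comp (repT t).1 (repT t).2.

Let rep_l (s : S) := (repS s).1 :: (repS s).2.
Let rep_r (t : T) := (repT t).1 :: (repT t).2.

Lemma rep_l_act s : ea_seq_act (rep_l s) =1 phi s.
Proof. by move=> w; rewrite repS_act ea_comp_seq_act. Qed.

Lemma rep_r_act t : ea_seq_act (rep_r t) =1 psi t.
Proof. by move=> w; rewrite repT_act ea_comp_seq_act. Qed.

Definition prod_rep (x : prod_sg S T) := prod_seq_act (rep_l x.1) (rep_r x.2).

Lemma prod_rep_inj x y : prod_rep x =1 prod_rep y -> x = y.
Proof.
case: x y => [s t] [s' t'] /prod_seq_act_injective [eq1 eq2].
have -> : s = s' by apply: phi_inj => w; rewrite -!rep_l_act.
by have -> : t = t' by apply: psi_inj => w; rewrite -!rep_r_act.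
Qed.

Lemma prod_rep_op x y : prod_rep (sg_op x y) =1
  prod_seq_act (rep_l x.1 ++ rep_l y.1) (rep_r x.2 ++ rep_r y.2).
Proof.
apply: eq_prod_seq_act => w; rewrite ea_seq_act_comp.
  by rewrite rep_l_act phi_morph /= -!rep_l_act.
by rewrite rep_r_act psi_morph /= -!rep_r_act.
Qed.

Lemma prod_rep_morph x y : prod_rep (sg_op x y) =1 prod_rep x \o prod_rep y.
Proof. by move=> w; rewrite prod_rep_op /= /prod_rep prod_seq_act_comp. Qed.

Section Generators.
Variable gens : seq (prod_sg S T).
Hypothesis gens_generate : forall x, exists g s,
  In g gens /\ (forall y, In y s -> In y gens) /\ x = sg_prod_ne g s.

Let N := sumn (map (fun g : prod_sg S T => size (repS g.1).2 + size (repT g.2).2) gens).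
Let PA := prod_automaton A B N.

Lemma prod_rep_onto (st : ea_Q PA) : exists x, prod_rep x =1 ea_act (A := PA) st.
Proof.
have [s phi_s] := phi_onto st.1.1 (ssval st.1.2).
have [t psi_t] := psi_onto st.2.1 (ssval st.2.2).
exists (s, t) => w; rewrite ea_act_prod_automaton.
apply: eq_prod_seq_act => u.
  by rewrite rep_l_act phi_s ea_comp_seq_act.
by rewrite rep_r_act psi_t ea_comp_seq_act.
Qed.

Definition gen_state (g : prod_sg S T) : ea_Q PA :=
  (((repS g.1).1, insubd (SeqSub (nil_bounded_seqs _ N)) (repS g.1).2),
   ((repT g.2).1, insubd (SeqSub (nil_bounded_seqs _ N)) (repT g.2).2)).

Lemma gen_state_act g : In g gens -> prod_rep g =1 ea_act (A := PA) (gen_state g).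
Proof.
move=> /(In_leq_sumn (fun g : prod_sg S T => size (repS g.1).2 + size (repT g.2).2)).
move=> le_gN w; rewrite ea_act_prod_automaton /prod_states_l /prod_states_r /=.
rewrite !val_insubd !mem_bounded_seqs (leq_trans (leq_addr _ _) le_gN).
by rewrite (leq_trans (leq_addl _ _) le_gN).
Qed.

Lemma prod_rep_comp x : exists q qs, prod_rep x =1 ea_comp (A := PA) q qs.
Proof.
have [g [s [g_gen [s_gen ->]]]] := gens_generate x.
exists (gen_state g), (map gen_state s).
elim: s g g_gen s_gen => [|y s IH] g g_gen s_gen w /=; first exact: gen_state_act.
rewrite prod_rep_morph /= -gen_state_act //.
by rewrite IH //; [apply: s_gen; left | move=> z z_s; apply: s_gen; right].
Qed.

Lemma prod_rep_comp_onto q qs : exists x, prod_rep x =1 ea_comp (A := PA) q qs.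
Proof.
elim: qs q => [|p qs IH] q; first exact: prod_rep_onto.
have [x1 x1_act] := prod_rep_onto q; have [x2 x2_act] := IH p.
by exists (sg_op x1 x2 : prod_sg S T) => w; rewrite prod_rep_morph /= x2_act x1_act.
Qed.

Lemma fg_prod_eas : is_expanding_automaton_semigroup (prod_sg S T).
Proof.
exists PA, prod_rep; split.
- exact: prod_rep_inj.
- exact: prod_rep_morph.
- exact: prod_rep_comp.
- exact: prod_rep_comp_onto.
Qed.

End Generators.
End FinitelyGeneratedProduct.

Theorem mainTheorem17 (S T : Sgrp) :
  is_expanding_automaton_semigroup S ->
  is_expanding_automaton_semigroup T ->
  (is_expanding_automaton_semigroup (prod_sg S T) <->
   finitely_generated (prod_sg S T)).
Proof.
move=> [A [phi [phi_inj phi_morph phi_rep phi_onto]]].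
move=> [B [psi [psi_inj psi_morph psi_rep psi_onto]]].
split=> [|[gens gens_generate]]; first exact: eas_finitely_generated.
have [repS repS_act] := ea_comp_choice phi_rep.
have [repT repT_act] := ea_comp_choice psi_rep.
exact: (fg_prod_eas phi_inj psi_inj phi_morph psi_morph phi_onto psi_onto
  repS_act repT_act gens_generate).
Qed.
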